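(* Let $(X,Y)$ be random with $Y\in\{0,1\}$, let $f$ take values in $S=\{s_1,\dots,s_B\}\subseteq[0,1]$, and let $T_n=\{(x_j,y_j)\}_{j=1}^n$ be i.i.d. from $(X,Y)$. Let $0\le c<0.5$ and $0<\delta<1$. Conditional on any realization of $(f(x_1),\dots,f(x_n))$ for which $|\hat p_i-p_i|<c\,p_i$ for all $i$, with probability at least $1-\delta$, $0\le \sum_{i=1}^B\hat p_i(\hat y_i-y_i^* )^2\le\frac{B}{2n}\log\frac{2B}{\delta}$.
   Context: $p_i=\Pr(f(X)=s_i)$, $y_i^*=\mathbb{E}[Y\mid f(X)=s_i]$. $\hat p_i=|\{j:f(x_j)=s_i\}|/n$ and $\hat y_i$ is the average of $y_j$ over $j$ with $f(x_j)=s_i$. *)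

From HB Require Import structures.
From mathcomp Require Import all_boot all_order all_algebra.
From mathcomp Require Import reals exp.
Set Implicit Arguments. Unset Strict Implicit. Unset Printing Implicit Defensive.
Import Order.TTheory GRing.Theory Num.Theory.
Local Open Scope ring_scope.

(* Only the joint law of
   (f(X), Y) matters: P0 i y = Pr(f(X) = s_i, Y = y), i : 'I_B, y : bool.
   A sample T_n, seen through f, is w : {ffun 'I_n -> 'I_B * bool},
   w j = (bin index of f(x_j), y_j); the i.i.d. law is the product law. *)
Section Calib.
Variables (R : realType) (B n : nat).

Definition pmass (P0 : 'I_B -> bool -> R) (i : 'I_B) : R := P0 i true + P0 i false.

Definition ystar (P0 : 'I_B -> bool -> R) (i : 'I_B) : R := P0 i true / pmass P0 i.

Definition sampleP (P0 : 'I_B -> bool -> R) (w : {ffun 'I_n -> 'I_B * bool}) : R :=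
  \prod_(j < n) P0 (w j).1 (w j).2.

Definition scores (w : {ffun 'I_n -> 'I_B * bool}) : {ffun 'I_n -> 'I_B} :=
  [ffun j => (w j).1].

Definition phat (b : {ffun 'I_n -> 'I_B}) (i : 'I_B) : R :=
  #|[set j | b j == i]|%:R / n%:R.

Definition yhat (w : {ffun 'I_n -> 'I_B * bool}) (i : 'I_B) : R :=
  (\sum_(j < n | (w j).1 == i) ((w j).2)%:R) / #|[set j | (w j).1 == i]|%:R.

Definition calib_err (P0 : 'I_B -> bool -> R) (w : {ffun 'I_n -> 'I_B * bool}) : R :=
  \sum_(i < B) phat (scores w) i * (yhat w i - ystar P0 i) ^+ 2.

Definition condprob (P0 : 'I_B -> bool -> R) (b : {ffun 'I_n -> 'I_B})
    (E : pred {ffun 'I_n -> 'I_B * bool}) : R :=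
  (\sum_(w | (scores w == b) && E w) sampleP P0 w) /
  (\sum_(w | scores w == b) sampleP P0 w).

End Calib.

(* Given the scores, the labels are independent and the j-th one is Bernoulli
   with mean y*_i, where s_i is the score of x_j.  If bin i holds m_i of the n
   samples and S_i is the sum of their labels, then
   p^_i (y^_i - y*_i)^2 = (S_i - m_i y*_i)^2 / (n m_i), so by Hoeffding's
   inequality this term exceeds L / (2n) with probability at most 2 e^-L.  A
   union bound over the B bins with L = ln (2B / delta) gives the theorem.  The
   hypothesis |p^_i - p_i| < c p_i is only used to get p_i > 0, without which
   the conditioning event could be null. *)

From HB Require Import structures.
From mathcomp Require Import all_boot all_order all_algebra.
From mathcomp Require Import ring lra.
From mathcomp Require Import reals normedtype sequences derive exp.
Import Order.TTheory GRing.Theory Num.Theory.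
Import numFieldNormedType.Exports.
Local Open Scope ring_scope.

Lemma ger0_is_derive_le (R : realType) (f df : R -> R) (a x : R) : a <= x ->
  (forall y, a <= y -> is_derive y 1 f (df y)) -> (forall y, a <= y -> 0 <= df y) ->
  f a <= f x.
Proof.
move=> ax f_df df_ge0.
have f_derivable y : y \in `[a, x] -> derivable f y 1.
  by rewrite in_itv /= => /andP[ay _]; have [] := f_df y ay.
have f_df_in y : y \in `]a, x[ -> is_derive y 1 f (df y).
  by rewrite in_itv /= => /andP[ay _]; apply/f_df/ltW.
have [c] := MVT_segment ax f_df_in (derivable_within_continuous f_derivable).
rewrite in_itv /= => /andP[ac _] /eqP; rewrite subr_eq => /eqP ->.
by rewrite lerDr mulr_ge0 ?df_ge0 ?subr_ge0.
Qed.

Section HoeffdingLemma.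
Variables (R : realType) (p : R).
Hypothesis p_ge0 : 0 <= p.

Let D (x : R) := p * expR x + (1 - p).
Let h (x : R) := p + x / 4 - p * expR x / D x.
Let G (x : R) := expR (p * x + x ^+ 2 / 8) / D x.

Let D_ge1 x : 0 <= x -> 1 <= D x.
Proof.
move=> x_ge0; have := p_ge0; have : 1 <= expR x by rewrite -expR0 ler_expR.
rewrite /D; nra.
Qed.

Let D_neq0 x : 0 <= x -> D x != 0.
Proof. by move=> x_ge0; rewrite gt_eqF // (lt_le_trans ltr01) ?D_ge1. Qed.

Let h_ge0 x : 0 <= x -> 0 <= h x.
Proof.
have h0 : h 0 = 0 by rewrite /h /D expR0 mulr1 subrKC divr1 mul0r addr0 subrr.
move=> x_ge0; rewrite -h0.
apply: (@ger0_is_derive_le _ h (fun y => 4^-1 - p * expR y * (1 - p) / D y ^+ 2) _ _ x_ge0).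
  move=> y y_ge0.
  have Dy := D_neq0 y y_ge0.
  apply: is_derive_eq; rewrite /D !scaler0 !addr0 /GRing.scale /=.
  by field.
move=> y y_ge0.
(* AM-GM: D y ^ 2 >= 4 (p e^y) (1 - p) *)
have D_gt0 : 0 < D y ^+ 2 by rewrite exprn_gt0 // (lt_le_trans ltr01) ?D_ge1.
rewrite subr_ge0 ler_pdivrMr // /D.
have := sqr_ge0 (p * expR y - (1 - p)); nra.
Qed.

Let G_ge1 x : 0 <= x -> 1 <= G x.
Proof.
have G0 : G 0 = 1.
  by rewrite /G /D expR0 !mulr0 expr0n /= mul0r addr0 expR0 mulr1 subrKC divr1.
move=> x_ge0; rewrite -G0.
apply: (@ger0_is_derive_le _ G (fun y => G y * h y) _ _ x_ge0) => y y_ge0.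
  have Dy := D_neq0 y y_ge0.
  apply: is_derive_eq; rewrite /G /h /D /GRing.scale /=.
  by field.
by rewrite mulr_ge0 ?h_ge0 // divr_ge0 ?expR_ge0 // (le_trans ler01) ?D_ge1.
Qed.

Lemma hoeffding_lemma_ge0 x : 0 <= x ->
  p * expR (x * (1 - p)) + (1 - p) * expR (- (x * p)) <= expR (x ^+ 2 / 8).
Proof.
move=> x_ge0; have := G_ge1 x x_ge0.
have D_gt0 : 0 < D x by rewrite (lt_le_trans ltr01) ?D_ge1.
rewrite /G ler_pdivlMr // mul1r.
have -> : p * expR (x * (1 - p)) + (1 - p) * expR (- (x * p)) = D x * expR (- (x * p)).
  by rewrite /D [RHS]mulrDl -mulrA -expRD; congr (_ * expR _ + _); ring.
move=> le_D; apply: (le_trans (y := expR (p * x + x ^+ 2 / 8) * expR (- (x * p)))).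
  by rewrite ler_pM2r ?expR_gt0.
by rewrite -expRD (_ : _ + _ = x ^+ 2 / 8) //; ring.
Qed.
End HoeffdingLemma.

Lemma hoeffding_lemma (R : realType) (p x : R) : 0 <= p <= 1 ->
  p * expR (x * (1 - p)) + (1 - p) * expR (- (x * p)) <= expR (x ^+ 2 / 8).
Proof.
move=> /andP[p_ge0 p_le1]; have [x_ge0|x_lt0] := leP 0 x.
  exact: hoeffding_lemma_ge0.
have q_ge0 : 0 <= 1 - p by rewrite subr_ge0.
have nx_ge0 : 0 <= - x by rewrite oppr_ge0 ltW.
have := @hoeffding_lemma_ge0 R _ q_ge0 _ nx_ge0.
by rewrite subKr sqrrN addrC !mulNr opprK.
Qed.

Lemma ler_sum_cover (R : numDomainType) (I T : finType) (F : T -> R)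
    (P : pred T) (Q : I -> pred T) :
  (forall x, 0 <= F x) -> (forall x, P x -> exists i, Q i x) ->
  \sum_(x | P x) F x <= \sum_i \sum_(x | Q i x) F x.
Proof.
move=> F_ge0 PQ.
rewrite (eq_bigr (fun i => \sum_x if Q i x then F x else 0)); last first.
  by move=> i _; rewrite big_mkcond.
rewrite exchange_big /= big_mkcond; apply: ler_sum => x _.
case: ifP => [/PQ[i Qix] | _]; last by apply: sumr_ge0 => i _; case: ifP.
by rewrite (bigD1 i) //= Qix lerDl; apply: sumr_ge0 => j _; case: ifP.
Qed.

Definition bern {R : pzRingType} (q : R) (t : bool) : R := if t then q else 1 - q.

Section BernoulliProduct.
Context {R : realType} {n : nat} (p : 'I_n -> R).
Hypothesis p01 : forall j, 0 <= p j <= 1.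

Definition bern_prod (y : {ffun 'I_n -> bool}) : R := \prod_j bern (p j) (y j).

Lemma bern_prod_ge0 y : 0 <= bern_prod y.
Proof.
apply: prodr_ge0 => j _; have /andP[? ?] := p01 j.
by case: (y j); rewrite /= ?subr_ge0.
Qed.

Lemma sum_bern_prod : \sum_y bern_prod y = 1.
Proof.
rewrite /bern_prod -(bigA_distr_bigA (fun j t => bern (p j) t)).
by apply: big1 => j _; rewrite big_bool /= subrKC.
Qed.

Variable A : {set 'I_n}.

Definition centered_sum (y : {ffun 'I_n -> bool}) : R := \sum_(j in A) ((y j)%:R - p j).

Lemma bern_prod_mgf k :
  \sum_y bern_prod y * expR (k * centered_sum y) <= expR (#|A|%:R * k ^+ 2 / 8).
Proof.
pose e j t : R := expR (if j \in A then k * (t%:R - p j) else 0).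
have exp_sum y : expR (k * centered_sum y) = \prod_j e j (y j).
  by rewrite /centered_sum mulr_sumr big_mkcond expR_sum.
under eq_bigr do rewrite exp_sum /bern_prod -big_split.
rewrite -(bigA_distr_bigA (fun j t => bern (p j) t * e j t)) /=.
rewrite -mulrA expRM_natl -prodr_const [X in _ <= X]big_mkcond /=.
apply: ler_prod => j _; rewrite big_bool /= /e.
have /andP[p_ge0 p_le1] := p01 j.
case: (j \in A); last by rewrite expR0 !mulr1 subrKC lexx ler01.
rewrite addr_ge0 ?mulr_ge0 ?expR_ge0 ?subr_ge0 //=.
by rewrite sub0r mulrN; exact: hoeffding_lemma.
Qed.

Lemma chernoff_bound k s :
  \sum_(y | s < k * centered_sum y) bern_prod y <= expR (- s + #|A|%:R * k ^+ 2 / 8).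
Proof.
rewrite expRD; apply: le_trans (ler_wpM2l (expR_ge0 (- s)) (bern_prod_mgf k)).
rewrite mulr_sumr big_mkcond; apply: ler_sum => y _; rewrite mulrCA -expRD.
case: ifP => [lt_s|_]; last by rewrite mulr_ge0 ?expR_ge0 ?bern_prod_ge0.
rewrite ler_peMr ?bern_prod_ge0 //.
by apply: le_trans (expR_ge1Dx _); rewrite lerDl addrC subr_ge0 ltW.
Qed.

(* Chernoff with the optimal rate k = 4t/|A| on each tail. *)
Lemma hoeffding_two_sided t : 0 < t -> (0 < #|A|)%N ->
  \sum_(y | t < `|centered_sum y|) bern_prod y <= 2 * expR (- (2 * t ^+ 2 / #|A|%:R)).
Proof.
move=> t_gt0 A_gt0; have m_gt0 : 0 < #|A|%:R :> R by rewrite ltr0n.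
set k := 4 * t / #|A|%:R; have k_gt0 : 0 < k by rewrite divr_gt0 ?mulr_gt0.
pose tail (b : bool) y := k * t < (if b then k else - k) * centered_sum y.
apply: le_trans (@ler_sum_cover _ _ _ bern_prod _ tail bern_prod_ge0 _) _.
  move=> y lt_t; have [X_ge0 | X_lt0] := leP 0 (centered_sum y).
    by exists true; rewrite /tail /= ltr_pM2l // -(ger0_norm X_ge0).
  by exists false; rewrite /tail /= mulNr -mulrN ltr_pM2l // -(ltr0_norm X_lt0).
rewrite big_bool /=; apply: le_trans (lerD (chernoff_bound _ _) (chernoff_bound _ _)) _.
rewrite sqrrN; have -> : - (k * t) + #|A|%:R * k ^+ 2 / 8 = - (2 * t ^+ 2 / #|A|%:R).
  by rewrite /k; field; rewrite gt_eqF.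
lra.
Qed.

End BernoulliProduct.

Lemma calib_err_ge0 (R : realType) (B n : nat) (P0 : 'I_B -> bool -> R)
    (w : {ffun 'I_n -> 'I_B * bool}) :
  0 <= calib_err P0 w.
Proof. by apply: sumr_ge0 => i _; rewrite mulr_ge0 ?sqr_ge0 ?divr_ge0. Qed.

Section GivenScores.
Context {R : realType} {B n : nat} (P0 : 'I_B -> bool -> R) (b : {ffun 'I_n -> 'I_B}).
Hypothesis P0_ge0 : forall i y, 0 <= P0 i y.
Hypothesis pmass_gt0 : forall i, 0 < pmass P0 i.

Definition with_labels (y : {ffun 'I_n -> bool}) : {ffun 'I_n -> 'I_B * bool} :=
  [ffun j => (b j, y j)].

Lemma scores_with_labels y : scores (with_labels y) = b.
Proof. by apply/ffunP => j; rewrite !ffunE. Qed.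

Lemma bern_ystar i t : bern (ystar P0 i) t = P0 i t / pmass P0 i.
Proof.
have := pmass_gt0 i; rewrite /ystar /pmass => /lt0r_neq0 pmass_neq0.
by case: t => //=; field.
Qed.

Lemma ystar_itv i : 0 <= ystar P0 i <= 1.
Proof.
by rewrite /ystar divr_ge0 ?(ltW (pmass_gt0 i)) //= ler_pdivrMr // mul1r /pmass lerDl.
Qed.

Definition label_prob : 'I_n -> R := fun j => ystar P0 (b j).

Lemma label_prob_itv j : 0 <= label_prob j <= 1. Proof. exact: ystar_itv. Qed.

Lemma sum_sampleP_scores (E : pred {ffun 'I_n -> 'I_B * bool}) :
  \sum_(w | (scores w == b) && E w) sampleP P0 w =
  \sum_(y | E (with_labels y)) \prod_j P0 (b j) (y j).
Proof.
pose labels (w : {ffun 'I_n -> 'I_B * bool}) : {ffun 'I_n -> bool} := [ffun j => (w j).2].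
rewrite (reindex with_labels); last first.
  exists labels => [y _ | w]; first by apply/ffunP => j; rewrite !ffunE.
  rewrite inE => /andP[/eqP sc _]; apply/ffunP => j.
  by rewrite !ffunE -sc ffunE; case: (w j).
apply: eq_big => y; first by rewrite scores_with_labels eqxx.
by move=> _; apply: eq_bigr => j _; rewrite ffunE.
Qed.

Lemma condprob_bern_prod (E : pred {ffun 'I_n -> 'I_B * bool}) :
  condprob P0 b E = \sum_(y | E (with_labels y)) bern_prod label_prob y.
Proof.
rewrite /condprob sum_sampleP_scores.
have -> : \sum_(w | scores w == b) sampleP P0 w = \prod_j pmass P0 (b j).
  rewrite (eq_bigl (fun w => (scores w == b) && predT w)) => [|w]; last by rewrite andbT.
  rewrite sum_sampleP_scores -(bigA_distr_bigA (fun j t => P0 (b j) t)).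
  by apply: eq_bigr => j _; rewrite big_bool.
rewrite mulr_suml; apply: eq_bigr => y _.
by rewrite -prodf_div; apply: eq_bigr => j _; rewrite bern_ystar.
Qed.

Definition bin (i : 'I_B) : {set 'I_n} := [set j | b j == i].

Lemma bin_err_with_labels i y :
  phat R b i * (yhat R (with_labels y) i - ystar P0 i) ^+ 2 =
  centered_sum label_prob (bin i) y ^+ 2 / (n%:R * #|bin i|%:R).
Proof.
have yhat_eq : yhat R (with_labels y) i = (\sum_(j in bin i) (y j)%:R) / #|bin i|%:R.
  rewrite /yhat; congr (_ / _%:R).
    by apply: eq_big => j; rewrite ?inE ffunE.
  by apply: eq_card => j; rewrite !inE ffunE.
have [bin_empty | bin_gt0] := posnP #|bin i|.
  move/eqP: bin_empty; rewrite cards_eq0 => /eqP bin_empty.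
  by rewrite /phat -/(bin i) /centered_sum bin_empty cards0 big_set0 !mul0r expr0n mul0r.
have n_gt0 : (0 < n)%N by rewrite -[n]card_ord (leq_trans bin_gt0) ?max_card.
have centered_eq :
    centered_sum label_prob (bin i) y = \sum_(j in bin i) (y j)%:R - #|bin i|%:R * ystar P0 i.
  rewrite /centered_sum sumrB mulr_natl -sumr_const; congr (_ - _).
  by apply: eq_bigr => j; rewrite inE => /eqP <-.
rewrite /phat -/(bin i) yhat_eq centered_eq; field.
by rewrite !pnatr_eq0 -!lt0n n_gt0 bin_gt0.
Qed.

Lemma bin_err_tail i L : 0 < L ->
  \sum_(y | L / (2 * n%:R) < phat R b i * (yhat R (with_labels y) i - ystar P0 i) ^+ 2)
    bern_prod label_prob y <= 2 * expR (- L).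
Proof.
move=> L_gt0; under eq_bigl do rewrite bin_err_with_labels.
set m := #|bin i|; have [m0 | m_gt0] := posnP m.
  rewrite big_pred0 ?mulr_ge0 ?expR_ge0 // => y.
  by rewrite m0 mulr0 invr0 mulr0 ltNge divr_ge0 ?mulr_ge0 ?ler0n ?ltW.
have n_gt0 : (0 < n)%N by rewrite -[n]card_ord (leq_trans m_gt0) ?max_card.
have nm_gt0 : 0 < n%:R * m%:R :> R by rewrite mulr_gt0 ?ltr0n.
set t := Num.sqrt (m%:R * L / 2).
have t_gt0 : 0 < t by rewrite sqrtr_gt0 divr_gt0 ?mulr_gt0 ?ltr0n.
have -> : L = 2 * t ^+ 2 / m%:R.
  rewrite sqr_sqrtr ?divr_ge0 ?mulr_ge0 ?ler0n ?(ltW L_gt0) //.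
  by field; rewrite pnatr_eq0 -lt0n.
apply: le_trans (hoeffding_two_sided _ label_prob_itv (bin i) _ t_gt0 m_gt0).
rewrite le_eqVlt; apply/orP; left; apply/eqP; apply: eq_bigl => y.
rewrite -[LHS](ltr_pM2r nm_gt0) divfK ?lt0r_neq0 //.
have -> : 2 * t ^+ 2 / m%:R / (2 * n%:R) * (n%:R * m%:R) = t ^+ 2.
  by field; rewrite !pnatr_eq0 -!lt0n n_gt0 m_gt0.
by rewrite -[X in _ < X]real_normK ?num_real // ltr_sqr ?nnegrE ?(ltW t_gt0).
Qed.

Lemma calib_err_tail L : 0 < L ->
  \sum_(y | B%:R / (2 * n%:R) * L < calib_err P0 (with_labels y)) bern_prod label_prob y
    <= B%:R * (2 * expR (- L)).
Proof.
move=> L_gt0.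
pose bin_bad i y :=
  L / (2 * n%:R) < phat R b i * (yhat R (with_labels y) i - ystar P0 i) ^+ 2.
apply: le_trans (@ler_sum_cover _ _ _ _ _ bin_bad (bern_prod_ge0 _ label_prob_itv) _) _.
  move=> y; case: (pickP (fun i => bin_bad i y)) => [i bad_i | no_bad]; first by exists i.
  rewrite ltNge => /negP; case; rewrite /calib_err scores_with_labels.
  have -> : B%:R / (2 * n%:R) * L = \sum_(i < B) L / (2 * n%:R).
    by rewrite sumr_const card_ord -mulr_natl; ring.
  by apply: ler_sum => i _; rewrite leNgt -/(bin_bad i y) no_bad.
apply: (@le_trans _ _ (\sum_(i < B) 2 * expR (- L))).
  by apply: ler_sum => i _; apply: bin_err_tail.
by rewrite sumr_const card_ord [leRHS]mulr_natl.
Qed.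

End GivenScores.

Theorem mainTheorem9 (R : realType) (B n : nat) (s : 'I_B -> R)
    (P0 : 'I_B -> bool -> R) (c delta : R) (b : {ffun 'I_n -> 'I_B}) :
  injective s -> (forall i, 0 <= s i <= 1) ->
  (forall i y, 0 <= P0 i y) -> \sum_(i < B) \sum_(y : bool) P0 i y = 1 ->
  0 <= c < 1 / 2 -> 0 < delta < 1 ->
  (forall i : 'I_B, `|phat R b i - pmass P0 i| < c * pmass P0 i) ->
  1 - delta <=
    condprob P0 b (fun w => (0 <= calib_err P0 w) &&
       (calib_err P0 w <= B%:R / (2 * n%:R) * ln (2 * B%:R / delta))).
Proof.
move=> _ _ P0_ge0 P0_sum /andP[c_ge0 _] /andP[delta_gt0 delta_lt1] phat_near.
have B_gt0 : (0 < B)%N.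
  case: posnP => // B0; subst B.
  by move: P0_sum; rewrite big_ord0 => /eqP; rewrite eq_sym oner_eq0.
have pmass_gt0 i : 0 < pmass P0 i.
  have := le_lt_trans (normr_ge0 _) (phat_near i); nra.
set L := ln _.
have B_ge1 : 1 <= B%:R :> R by rewrite ler1n.
have ratio_gt1 : 1 < 2 * B%:R / delta by rewrite ltr_pdivlMr //; lra.
have L_gt0 : 0 < L by rewrite ln_gt0.
have tail_eq : B%:R * (2 * expR (- L)) = delta.
  by rewrite expRN lnK ?posrE ?(lt_trans ltr01) //; field; rewrite !gt_eqF ?ltr0n.
have := calib_err_tail P0 b P0_ge0 pmass_gt0 _ L_gt0; rewrite tail_eq => bad_le.
rewrite (condprob_bern_prod P0 b pmass_gt0).
under eq_bigl do rewrite calib_err_ge0 /=.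
have := sum_bern_prod (label_prob P0 b).
rewrite (bigID [pred y | calib_err P0 (with_labels b y) <= B%:R / (2 * n%:R) * L]) /=.
under [X in _ + X]eq_bigl do rewrite -ltNge.
lra.
Qed.
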